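(* Let $q$ be a prime power, let $\mathcal{C} \subseteq \mathbb{F}_q^n$ be a linear code of dimension $k$, and let $d \ge 1$ be an integer. Then at least one of the following holds: (1) there exists a linear subcode $\mathcal{C}' \subseteq \mathcal{C}$ with $\mathrm{Density}(\mathcal{C}') > 1/d$; (2) for every integer $\alpha \ge 1$, the number of codewords $c \in \mathcal{C}$ with $\mathrm{wt}(c) \le \alpha d$ is at most $q^{\alpha} \binom{k}{\alpha}$.
   Context: $\mathrm{wt}(c)$ is the number of nonzero coordinates of $c$. For a linear code $\mathcal{D} \subseteq \mathbb{F}_q^n$, its support size is $\mathrm{Supp}(\mathcal{D}) = |\{ i \in [n] : \exists c \in \mathcal{D},\ c_i \neq 0\}|$, and its density is $\mathrm{Density}(\mathcal{D}) = \dim(\mathcal{D})/\mathrm{Supp}(\mathcal{D})$, with the density of the zero code defined to be $0$. A subcode is a linear subspace. $\binom{k}{\alpha} = 0$ if $\alpha > k$ is not relevant here: for $\alpha \ge k$ the bound is interpreted with the usual binomial coefficient. *)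

From HB Require Import structures.
From mathcomp Require Import all_boot all_order all_algebra all_field.
Set Implicit Arguments. Unset Strict Implicit. Unset Printing Implicit Defensive.
Import Order.TTheory GRing.Theory Num.Theory.

Definition wt (F : finFieldType) (n : nat) (c : 'rV[F]_n) : nat :=
  #|[set i : 'I_n | c ord0 i != 0%R]|.

Definition Supp (F : finFieldType) (n : nat) (D : {vspace 'rV[F]_n}) : nat :=
  #|[set i : 'I_n | [exists c : 'rV[F]_n, (c \in D) && (c ord0 i != 0%R)]]|.

Definition Density (F : finFieldType) (n : nat) (D : {vspace 'rV[F]_n}) : rat :=
  if D == 0%VS then 0%R else ((\dim D)%:R / (Supp D)%:R)%R.

From mathcomp Require Import all_boot all_order all_algebra all_field.
From mathcomp Require Import zify.
From Stdlib Require Import Classical.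
Import Order.TTheory GRing.Theory Num.Theory.

Set Implicit Arguments.
Unset Strict Implicit.
Unset Printing Implicit Defensive.

(* If no subcode of D has density above 1/d, then every subcode V satisfies
   d * dim V <= Supp V. Induct on k = dim D and double count the pairs (c, i)
   with c a codeword of weight at most a*d and i a coordinate of the support of
   D where c vanishes. For fixed i these c are the light codewords of the
   shortened code {c in D | c_i = 0}, of dimension k - 1, so there are at most
   N q^a C(k-1, a) pairs, where N = Supp D; for fixed c there are at least
   N - a d such i. Since N >= d k, N / (N - a d) <= k / (k - a), which turns
   q^a C(k-1, a) into q^a C(k, a). *)

Lemma card_set_in_pred (T : finType) (A : {set T}) (P : pred T) :
  #|[set x in A | P x]| = \sum_(x in A) P x.
Proof.
rewrite -sum1_card big_mkcond [RHS]big_mkcond /=.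
by apply: eq_bigr => x _; rewrite inE; case: (x \in A); case: (P x).
Qed.

Lemma double_count (I J : finType) (A : {set I}) (B : {set J}) (R : I -> J -> bool) :
  \sum_(i in A) #|[set x in B | R i x]| = \sum_(x in B) #|[set i in A | R i x]|.
Proof.
under eq_bigr do rewrite card_set_in_pred.
by rewrite exchange_big; apply: eq_bigr => x _; rewrite card_set_in_pred.
Qed.

Lemma leq_mul_ratio (L N B k a d : nat) :
  0 < d -> a < k -> d * k <= N -> L * (N - a * d) <= N * B ->
  L * (k - a) <= k * B.
Proof.
move=> d_gt0 lt_ak le_dkN le_LNB.
have N_gt0 : 0 < N by apply: leq_trans le_dkN; rewrite muln_gt0 d_gt0; lia.
have le_ratio : N * (k - a) <= (N - a * d) * k by nia.
rewrite -(leq_pmul2l N_gt0).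
have := leq_mul le_ratio (leqnn L); have := leq_mul le_LNB (leqnn k).
nia.
Qed.

Section LightCodewords.
Variables (F : finFieldType) (n : nat).
Implicit Types (D V : {vspace 'rV[F]_n}) (c : 'rV[F]_n) (i : 'I_n).
Local Open Scope ring_scope.

Definition support D : {set 'I_n} :=
  [set i | [exists c, (c \in D) && (c ord0 i != 0)]].

Definition nonzero_coords c : {set 'I_n} := [set i | c ord0 i != 0].

Definition low_weight D (t : nat) : {set 'rV[F]_n} :=
  [set c | (c \in D) && (wt c <= t)%N].

Definition coord_hyperplane i : {vspace 'rV[F]_n} := lker (linfun (@col F 1 n i)).

Lemma mem_coord_hyperplane c i : (c \in coord_hyperplane i) = (c ord0 i == 0).
Proof.
rewrite memv_ker lfunE /=; apply/eqP/eqP => [c0 | ci0].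
  by have := congr1 (fun M : 'M[F]_1 => M ord0 ord0) c0; rewrite !mxE.
by apply/matrixP => ? ?; rewrite !ord1 !mxE ci0.
Qed.

Lemma dim_cap_coord_hyperplane D i :
  i \in support D -> \dim (D :&: coord_hyperplane i) = (\dim D).-1.
Proof.
rewrite inE => /existsP [c /andP [cD ci]].
have := limg_ker_dim (linfun (@col F 1 n i)) D.
suff -> : \dim (linfun (@col F 1 n i) @: D) = 1%N by move <-; rewrite addn1.
apply/eqP; rewrite eqn_leq (leq_trans (dimvS (subvf _))) ?dimvf //=.
rewrite lt0n dimv_eq0; apply: contraNneq ci => img0.
have := memv_img (linfun (@col F 1 n i)) cD.
by rewrite img0 memv0 -memv_ker -/(coord_hyperplane i) mem_coord_hyperplane.
Qed.

Lemma low_weight_cap_coord_hyperplane D i t :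
  low_weight (D :&: coord_hyperplane i) t = [set c in low_weight D t | c ord0 i == 0].
Proof.
apply/setP => c; rewrite !inE memv_cap mem_coord_hyperplane.
by case: (c \in D); case: (c ord0 i == 0); rewrite ?andbT ?andbF.
Qed.

Lemma sum_card_low_weight_cap_coord_hyperplane D t :
  (\sum_(i in support D) #|low_weight (D :&: coord_hyperplane i) t|
   = \sum_(c in low_weight D t) #|support D :\: nonzero_coords c|)%N.
Proof.
under eq_bigr do rewrite low_weight_cap_coord_hyperplane.
rewrite double_count; apply: eq_bigr => c _; apply: eq_card => i.
by rewrite !inE negbK andbC.
Qed.

Lemma card_support_diff_nonzero_coords D t c :
  c \in low_weight D t -> (#|support D| - t <= #|support D :\: nonzero_coords c|)%N.
Proof.
rewrite inE => /andP [_ wt_c]; rewrite cardsD leq_sub2l //.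
by apply: leq_trans wt_c; apply: subset_leq_card; apply: subsetIr.
Qed.

Definition low_density (d : nat) D :=
  forall V, (V <= D)%VS -> (d * \dim V <= Supp V)%N.

Lemma low_densityS d D V : (V <= D)%VS -> low_density d D -> low_density d V.
Proof. by move=> sVD hD W sWV; apply: hD; apply: subv_trans sWV sVD. Qed.

Lemma card_low_weight_le (d a : nat) D : (0 < d)%N -> low_density d D ->
  (1 <= a <= \dim D)%N -> (#|low_weight D (a * d)| <= #|F| ^ a * 'C(\dim D, a))%N.
Proof.
move=> d_gt0; move Dk: (\dim D) => k; elim: k D Dk => [|k IHk] D Dk hD.
  by case: a => [|a] /andP [].
case/andP=> a_gt0; rewrite leq_eqVlt => /predU1P [-> | lt_ak].
  rewrite binn muln1 -Dk -card_vspace subset_leq_card //.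
  by apply/subsetP => c; rewrite inE => /andP [].
set B := (#|F| ^ a * 'C(k, a))%N.
have shortened_le i : i \in support D ->
    (#|low_weight (D :&: coord_hyperplane i) (a * d)| <= B)%N.
  move=> iD; apply: IHk; rewrite ?a_gt0 //.
    by rewrite dim_cap_coord_hyperplane // Dk.
  exact: low_densityS (capvSl _ _) hD.
have pairs_le : (#|low_weight D (a * d)| * (#|support D| - a * d)
    <= #|support D| * B)%N.
  rewrite -sum_nat_const; apply: (@leq_trans (\sum_(c in low_weight D (a * d))
    #|support D :\: nonzero_coords c|)).
    exact/leq_sum/card_support_diff_nonzero_coords.
  rewrite -sum_card_low_weight_cap_coord_hyperplane -sum_nat_const.
  exact: leq_sum shortened_le.
have le_dk_supp : (d * k.+1 <= #|support D|)%N by rewrite -Dk; apply: hD.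
have := leq_mul_ratio d_gt0 lt_ak le_dk_supp pairs_le.
rewrite /B mulnCA -[k in 'C(k, a)]/(k.+1.-1) mul_bin_down mulnCA.
by rewrite [X in (X <= _)%N -> _]mulnC leq_pmul2l ?subn_gt0.
Qed.

Lemma Supp_gt0 D : D != 0%VS -> (0 < Supp D)%N.
Proof.
move=> D0; rewrite card_gt0; apply/set0Pn.
have pick_neq0 : vpick D != 0 by rewrite vpick0.
have [i pick_i] : exists i, vpick D ord0 i != 0.
  apply/existsP; apply: contraR pick_neq0 => /existsPn pick0.
  by apply/eqP/matrixP => ? j; rewrite ord1 mxE; apply/eqP/negPn/pick0.
by exists i; rewrite inE; apply/existsP; exists (vpick D); rewrite memv_pick.
Qed.

Lemma low_density_of_Density_le (d : nat) D : (0 < d)%N ->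
  (forall V, (V <= D)%VS -> Density V <= 1 / d%:R) -> low_density d D.
Proof.
move=> d_gt0 hD V /hD; have [-> _ | V0] := eqVneq V 0%VS; first by rewrite dimv0 muln0.
rewrite /Density (negbTE V0) ler_pdivrMr ?ltr0n ?Supp_gt0 // mul1r mulrC.
by rewrite ler_pdivlMr ?ltr0n // -natrM ler_nat mulnC.
Qed.
End LightCodewords.

Theorem theorem2p2 (F : finFieldType) (n : nat) (C : {vspace 'rV[F]_n}) (d : nat) :
  (0 < d)%N ->
  (exists C' : {vspace 'rV[F]_n}, (C' <= C)%VS /\ (1 / d%:R < Density C')%R)
  \/
  (forall alpha : nat, (1 <= alpha <= \dim C)%N ->
     (#|[set c : 'rV[F]_n | (c \in C) && (wt c <= alpha * d)%N]|
        <= #|F| ^ alpha * 'C(\dim C, alpha))%N).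
Proof.
move=> d_gt0.
have [dense | no_dense] := classic (exists C' : {vspace 'rV[F]_n},
  (C' <= C)%VS /\ (1 / d%:R < Density C')%R); [by left | right].
move=> a a_range; apply: card_low_weight_le => //.
apply: low_density_of_Density_le => // V sVC; rewrite leNgt.
by apply/negP => lt_V; apply: no_dense; exists V.
Qed.
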